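(* Let $p$ be a prime, $n$ a positive integer, and $t$ a real number with $1\le t\le p$. For $A\in GL(n,\mathbf{Q}_p)$ let $\|A\|=\max_{j,k}|a_{j,k}|_p$, $r(A)=\max(\|A-I\|,\|A^{-1}-I\|)$ and $r'(A)=\min(r(A),t)$. Then $r'(I)=0$, $r'(A)>0$ for $A\neq I$, $r'(A^{-1})=r'(A)$, and $r'(AB)\le\max(r'(A),r'(B))$ for all $A,B\in GL(n,\mathbf{Q}_p)$. Consequently $r'(B^{-1}A)$ is a left-invariant ultrametric and $r'(AB^{-1})$ a right-invariant ultrametric on $GL(n,\mathbf{Q}_p)$, each determining the standard topology; and for $A,B\in GL(n,\mathbf{Z}_p)$ one has $r'(B^{-1}A)=\|A-B\|$.
   Context: $GL(n,\mathbf{Q}_p)$ is the group of invertible $n\times n$ matrices over $\mathbf{Q}_p$ with topology induced from $M_n(\mathbf{Q}_p)\cong\mathbf{Q}_p^{n^2}$; $GL(n,\mathbf{Z}_p)=\{A\in M_n(\mathbf{Z}_p): |\det A|_p=1\}$. *)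

(* Such (K, v) is exactly (a copy of) the completion Q_p of (Q, |.|_p). *)
From HB Require Import structures.
From mathcomp Require Import all_boot all_order all_algebra.
From mathcomp Require Import reals.
Set Implicit Arguments. Unset Strict Implicit. Unset Printing Implicit Defensive.
Import Order.TTheory GRing.Theory Num.Theory.
Local Open Scope ring_scope.

Record is_Qp (p : nat) (R : realType) (K : fieldType) (v : K -> R) : Prop := {
  Qp_abs_ge0 : forall x, 0 <= v x;
  Qp_abs_eq0 : forall x, v x = 0 <-> x = 0;
  Qp_absM : forall x y, v (x * y) = v x * v y;
  Qp_abs_ultra : forall x y, v (x + y) <= Num.max (v x) (v y);
  Qp_abs_p : v (p%:R) = (p%:R)^-1;
  Qp_complete : forall u : nat -> K,
    (forall eps : R, 0 < eps -> exists N : nat, forall m k : nat,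
        (N <= m)%N -> (N <= k)%N -> v (u m - u k) < eps) ->
    exists l : K, forall eps : R, 0 < eps -> exists N : nat, forall m : nat,
        (N <= m)%N -> v (u m - l) < eps;
  Qp_Q_dense : forall (x : K) (eps : R), 0 < eps ->
    exists q : rat, v (x - ratr q) < eps
}.

Section Defs.
Variables (R : realType) (K : fieldType) (v : K -> R) (n : nat).

Definition mxnorm (A : 'M[K]_n) : R :=
  \big[Num.max/0]_(j < n) \big[Num.max/0]_(k < n) v (A j k).

Definition rmx (A : 'M[K]_n) : R :=
  Num.max (mxnorm (A - 1%:M)) (mxnorm (invmx A - 1%:M)).

Definition rmx' (t : R) (A : 'M[K]_n) : R := Num.min (rmx A) t.

Definition GLZp (A : 'M[K]_n) : Prop :=
  (forall j k, v (A j k) <= 1) /\ v (\det A) = 1.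

Definition ultrametric_GL (d : 'M[K]_n -> 'M[K]_n -> R) : Prop :=
  (forall A B, A \in unitmx -> B \in unitmx -> 0 <= d A B) /\
  (forall A, A \in unitmx -> d A A = 0) /\
  (forall A B, A \in unitmx -> B \in unitmx -> d A B = 0 -> A = B) /\
  (forall A B, A \in unitmx -> B \in unitmx -> d A B = d B A) /\
  (forall A B C, A \in unitmx -> B \in unitmx -> C \in unitmx ->
     d A C <= Num.max (d A B) (d B C)).

(* the metric d induces on GL(n,K) the topology induced from
   M_n(K) = K^(n^2) (product topology = topology of the sup norm) *)
Definition standard_topology_GL (d : 'M[K]_n -> 'M[K]_n -> R) : Prop :=
  forall U : 'M[K]_n -> Prop,
    (forall A, A \in unitmx -> U A -> exists2 eps : R, 0 < eps &
        forall B, B \in unitmx -> d A B < eps -> U B) <->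
    (forall A, A \in unitmx -> U A -> exists2 eps : R, 0 < eps &
        forall B, B \in unitmx -> mxnorm (B - A) < eps -> U B).

End Defs.

(* The absolute value of Q_p takes its nonzero values in p^Z, so a matrix whose
   entries all have absolute value < t <= p has norm at most 1.  Hence when
   r(A), r(B) < t, the identity AB - 1 = (A - 1) B + (B - 1) and the
   ultrametric inequality give r(AB) <= max(r(A), r(B)); when one of them is
   >= t the truncation at t makes the inequality trivial.  The usual group-norm
   argument then makes r'(B^-1 A) a left-invariant ultrametric, and
   transposition carries it to the right-invariant one.  Both are comparable to
   ||B - A|| near any point because ||X^-1 - 1|| <= ||X - 1|| once
   ||X - 1|| < 1.  On GL(n, Z_p), multiplication by B^-1 preserves ||.||, so
   r'(B^-1 A) = ||B^-1 A - 1|| = ||A - B||. *)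

From HB Require Import structures.
From mathcomp Require Import all_boot all_order all_algebra.
From mathcomp Require Import reals.
Import Order.TTheory GRing.Theory Num.Theory.
Local Open Scope ring_scope.
Set Implicit Arguments. Unset Strict Implicit.

Record nonarchimedean_abs (R : realType) (K : fieldType) (v : K -> R) : Prop := {
  nabs_ge0 : forall x, 0 <= v x;
  nabs_eq0 : forall x, v x = 0 <-> x = 0;
  nabsM : forall x y, v (x * y) = v x * v y;
  nabs_ultra : forall x y, v (x + y) <= Num.max (v x) (v y)
}.

Lemma Qp_nonarchimedean p (R : realType) (K : fieldType) (v : K -> R) :
  is_Qp p v -> nonarchimedean_abs v.
Proof. by case. Qed.

Section NonarchimedeanAbs.
Variables (R : realType) (K : fieldType) (v : K -> R).
Hypothesis Hv : nonarchimedean_abs v.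

Lemma nabs0 : v 0 = 0. Proof. exact/(nabs_eq0 Hv). Qed.

Lemma nabs_gt0 x : x != 0 -> 0 < v x.
Proof. by move=> x0; rewrite lt0r (nabs_ge0 Hv) andbT; apply: contra_neq x0 => /(nabs_eq0 Hv). Qed.

Lemma nabs1 : v 1 = 1.
Proof.
have v1_gt0 : 0 < v 1 by rewrite nabs_gt0 ?oner_neq0.
by apply: (mulfI (lt0r_neq0 v1_gt0)); rewrite -(nabsM Hv) !mulr1.
Qed.

Lemma nabsX x k : v (x ^+ k) = v x ^+ k.
Proof. by elim: k => [|k IH]; rewrite ?nabs1 // !exprS (nabsM Hv) IH. Qed.

Lemma nabsN x : v (- x) = v x.
Proof.
have vN1 : v (-1) = 1.
  apply: (pexpIrn (isT : (0 < 2)%N)); rewrite ?nnegrE ?(nabs_ge0 Hv) ?ler01 //.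
  by rewrite -nabsX sqrrN expr1n nabs1 expr1n.
by rewrite -mulN1r (nabsM Hv) vN1 mul1r.
Qed.

Lemma nabsV x : v x^-1 = (v x)^-1.
Proof.
have [->|x0] := eqVneq x 0; first by rewrite invr0 nabs0 invr0.
have vx_neq0 := lt0r_neq0 (nabs_gt0 x0).
by apply: (mulfI vx_neq0); rewrite -(nabsM Hv) !divff ?nabs1.
Qed.

Lemma nabsD_le x y c : v x <= c -> v y <= c -> v (x + y) <= c.
Proof. by move=> hx hy; apply: le_trans (nabs_ultra Hv x y) _; rewrite ge_max hx hy. Qed.

Lemma nabsD_eq x y : v y < v x -> v (x + y) = v x.
Proof.
move=> yx; apply/le_anti/andP; split; first exact: nabsD_le (ltW yx).
have := nabs_ultra Hv (x + y) (- y); rewrite addrK nabsN le_max.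
by case/orP => // /(lt_le_trans yx); rewrite ltxx.
Qed.

Lemma nabs_sum_le (I : Type) (r : seq I) (P : pred I) (F : I -> K) c :
  0 <= c -> (forall i, P i -> v (F i) <= c) -> v (\sum_(i <- r | P i) F i) <= c.
Proof.
move=> c0 hF; elim/big_ind: _ => //; first by rewrite nabs0.
by move=> x y; apply: nabsD_le.
Qed.

Lemma nabs_prod_le1 (I : Type) (r : seq I) (P : pred I) (F : I -> K) :
  (forall i, P i -> v (F i) <= 1) -> v (\prod_(i <- r | P i) F i) <= 1.
Proof.
move=> hF; elim/big_ind: _ => //; first by rewrite nabs1.
by move=> x y hx hy; rewrite (nabsM Hv) mulr_ile1 ?(nabs_ge0 Hv).
Qed.

Lemma nabs_nat_le1 m : v m%:R <= 1.
Proof. by elim: m => [|m IH]; rewrite ?nabs0 // -addn1 natrD nabsD_le ?nabs1. Qed.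

End NonarchimedeanAbs.

Section PadicAbs.
Variables (p : nat) (R : realType) (K : fieldType) (v : K -> R).
Hypotheses (p_prime : prime p) (Hv : is_Qp p v).
Let Hna := Qp_nonarchimedean Hv.

Lemma prime_inv_lt1 : (p%:R : R)^-1 < 1.
Proof. by rewrite invf_lt1 ?ltr1n ?prime_gt1 // ltr0n prime_gt0. Qed.

Lemma Qp_abs_coprime m : coprime p m -> v m%:R = 1.
Proof.
move=> cop_pm; apply/le_anti; rewrite (nabs_nat_le1 Hna) /=.
have [a _] := Bezoutl m (prime_gt0 p_prime); rewrite (eqP cop_pm) => /dvdnP[c hc].
rewrite leNgt; apply/negP => vm_lt1.
have vam_lt1 : v (a%:R * m%:R) < 1.
  rewrite (nabsM Hna) (le_lt_trans _ vm_lt1) //.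
  by rewrite ler_piMl ?(nabs_ge0 Hna) ?(nabs_nat_le1 Hna).
have := congr1 (fun k : nat => v k%:R) hc; rewrite /= natrD natrM (nabsD_eq Hna) ?(nabs1 Hna) //.
rewrite natrM (nabsM Hna) (Qp_abs_p Hv) => /esym c_p_eq1.
have : v c%:R / p%:R <= (p%:R)^-1 by rewrite ler_piMl ?invr_ge0 ?ler0n ?(nabs_nat_le1 Hna).
by rewrite c_p_eq1 leNgt prime_inv_lt1.
Qed.

Lemma Qp_abs_nat m : (0 < m)%N -> exists k, v m%:R = ((p ^ k)%:R)^-1.
Proof.
move=> m_gt0; have [m' cop_pm' ->] := pfactor_coprime p_prime m_gt0.
exists (logn p m); rewrite natrM (nabsM Hna) Qp_abs_coprime // mul1r.
by rewrite !natrX (nabsX Hna) (Qp_abs_p Hv) exprVn.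
Qed.

Lemma Qp_abs_int (z : int) : z != 0 -> exists k, v z%:~R = ((p ^ k)%:R)^-1.
Proof.
have -> : v z%:~R = v `|z|%:R by case: z => m; rewrite // NegzE mulrNz (nabsN Hna).
by move=> z0; apply: Qp_abs_nat; rewrite absz_gt0.
Qed.

Lemma Qp_abs_rat_lt_p_le1 (q : rat) : v (ratr q) < p%:R -> v (ratr q) <= 1.
Proof.
have [->|q0] := eqVneq q 0; first by rewrite /ratr mul0r (nabs0 Hna).
rewrite /ratr (nabsM Hna) (nabsV Hna).
have [ka ->] : exists k, v (numq q)%:~R = ((p ^ k)%:R)^-1.
  by apply: Qp_abs_int; rewrite numq_eq0.
have [kb ->] := Qp_abs_int (denq_neq0 q).
have pX_gt0 k : (0 : R) < (p ^ k)%:R by rewrite ltr0n expn_gt0 prime_gt0.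
rewrite invrK mulrC ltr_pdivrMr // ler_pdivrMr // mul1r -natrM ltr_nat ler_nat -expnS.
by rewrite ltn_exp2l ?prime_gt1 // ltnS leq_exp2l ?prime_gt1.
Qed.

(* The value group is [p^Z], so no absolute value lies strictly between 1 and [p]. *)
Lemma Qp_abs_lt_p_le1 x : v x < p%:R -> v x <= 1.
Proof.
have [->|x0] := eqVneq x 0; first by rewrite (nabs0 Hna).
have [q hq] := Qp_Q_dense Hv x (nabs_gt0 Hna x0).
have -> : v x = v (ratr q).
  by rewrite -[ratr q](subKr x) (nabsD_eq Hna) // (nabsN Hna).
exact: Qp_abs_rat_lt_p_le1.
Qed.

End PadicAbs.

Lemma invmx_mul (F : comUnitRingType) n (A B : 'M[F]_n) :
  A \in unitmx -> B \in unitmx -> invmx (A *m B) = invmx B *m invmx A.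
Proof.
move=> Au Bu; have ABu : A *m B \in unitmx by rewrite unitmx_mul Au Bu.
rewrite -[RHS](mulKmx ABu) -mulmxA (mulmxA B) mulmxV // mul1mx mulmxV //.
by rewrite mulmx1.
Qed.

Lemma mul_le_div_addr1_lt (R : realFieldType) (c e x : R) :
  0 <= c -> 0 < e -> x <= e / (c + 1) -> c * x < e.
Proof.
move=> c_ge0 e_gt0 x_le; have c1_gt0 : 0 < c + 1 by rewrite ltr_wpDl.
apply: le_lt_trans (ler_wpM2l c_ge0 x_le) _.
by rewrite mulrA ltr_pdivrMr // mulrDr mulr1 mulrC ltrDl.
Qed.

Section MatrixNorm.
Variables (R : realType) (K : fieldType) (v : K -> R) (n : nat).
Hypothesis Hv : nonarchimedean_abs v.
Local Notation N := (@mxnorm R K v n).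

Lemma mxnorm_ge0 (A : 'M[K]_n) : 0 <= N A.
Proof. exact: bigmax_ge_id. Qed.

Lemma abs_coef_le_mxnorm (A : 'M[K]_n) j k : v (A j k) <= N A.
Proof. exact: le_trans (le_bigmax _ (fun k => v (A j k)) k) (le_bigmax _ _ j). Qed.

Lemma mxnorm_le (A : 'M[K]_n) c : 0 <= c -> (forall j k, v (A j k) <= c) -> N A <= c.
Proof. by move=> c0 hA; apply: bigmax_le => // j _; apply: bigmax_le. Qed.

Lemma mxnorm0 : N 0 = 0.
Proof. by apply/le_anti; rewrite mxnorm_ge0 mxnorm_le // => j k; rewrite mxE (nabs0 Hv). Qed.

Lemma mxnorm_gt0 (A : 'M[K]_n) : A != 0 -> 0 < N A.
Proof.
move=> A0; have /existsP[[j k] /= Ajk] : [exists jk : 'I_n * 'I_n, A jk.1 jk.2 != 0].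
  apply: contraR A0 => /existsPn A0; apply/eqP/matrixP => j k; rewrite mxE.
  exact/eqP/negbNE/(A0 (j, k)).
exact: lt_le_trans (nabs_gt0 Hv Ajk) (abs_coef_le_mxnorm _ _ _).
Qed.

Lemma mxnormD (A B : 'M[K]_n) : N (A + B) <= Num.max (N A) (N B).
Proof.
apply: mxnorm_le => [|j k]; first by rewrite le_max mxnorm_ge0.
by rewrite mxE (nabsD_le Hv) // le_max abs_coef_le_mxnorm ?orbT.
Qed.

Lemma mxnormN (A : 'M[K]_n) : N (- A) = N A.
Proof.
suff le_mxnormN B : N (- B) <= N B
  by apply/le_anti/andP; split; [|rewrite -{1}(opprK A)]; apply: le_mxnormN.
by apply: mxnorm_le (mxnorm_ge0 _) _ => j k; rewrite mxE (nabsN Hv) abs_coef_le_mxnorm.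
Qed.

Lemma mxnormM (A B : 'M[K]_n) : N (A *m B) <= N A * N B.
Proof.
have NAB_ge0 : 0 <= N A * N B by rewrite mulr_ge0 ?mxnorm_ge0.
apply: mxnorm_le => // j k; rewrite mxE; apply: (nabs_sum_le Hv) => // i _.
by rewrite (nabsM Hv) ler_pM ?(nabs_ge0 Hv) ?abs_coef_le_mxnorm.
Qed.

Lemma mxnorm_tr (A : 'M[K]_n) : N A^T = N A.
Proof.
suff le_mxnorm_tr B : N B^T <= N B
  by apply/le_anti/andP; split; [|rewrite -{1}(trmxK A)]; apply: le_mxnorm_tr.
by apply: mxnorm_le (mxnorm_ge0 _) _ => j k; rewrite mxE abs_coef_le_mxnorm.
Qed.

Lemma mxnorm1_le1 : N 1%:M <= 1.
Proof.
by apply: mxnorm_le => // j k; rewrite mxE; case: (j == k); rewrite ?(nabs1 Hv) ?(nabs0 Hv).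
Qed.

Lemma mxnorm_mul_unit_le1 (U X : 'M[K]_n) :
  U \in unitmx -> N U <= 1 -> N (invmx U) <= 1 -> N (U *m X) = N X.
Proof.
move=> Uu NU NiU; apply/le_anti/andP; split.
  by apply: le_trans (mxnormM _ _) _; rewrite ler_piMl ?mxnorm_ge0.
rewrite -{1}(mulKmx Uu X); apply: le_trans (mxnormM _ _) _.
by rewrite ler_piMl ?mxnorm_ge0.
Qed.

Lemma mxnorm_invmx_sub1_le (X : 'M[K]_n) :
  X \in unitmx -> N (X - 1%:M) < 1 -> N (invmx X - 1%:M) <= N (X - 1%:M).
Proof.
move=> Xu E_lt1; set E := X - 1%:M; set F := invmx X - 1%:M.
have F_le : N F <= N E * N (invmx X).
  suff -> : F = - (E *m invmx X) by rewrite mxnormN mxnormM.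
  by rewrite mulmxBl mulmxV // mul1mx opprB.
have NiX : N (invmx X) <= Num.max (N F) 1.
  rewrite -[invmx X](subrK 1%:M); apply: le_trans (mxnormD _ _) _.
  by rewrite ge_max !le_max lexx mxnorm1_le1 !orbT.
have [F_le1|F_gt1] := leP (N F) 1.
  apply: le_trans F_le (ler_piMr (mxnorm_ge0 _) (le_trans NiX _)).
  by rewrite ge_max F_le1 lexx.
rewrite (max_idPl (ltW F_gt1)) in NiX.
have := le_trans F_le (ler_wpM2l (mxnorm_ge0 _) NiX).
by rewrite ler_pMl ?(lt_trans ltr01 F_gt1) // leNgt E_lt1.
Qed.

Lemma abs_det_le1 m (A : 'M[K]_m) : (forall j k, v (A j k) <= 1) -> v (\det A) <= 1.
Proof.
move=> A_le1; apply: (nabs_sum_le Hv) => // s _.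
by rewrite (nabsM Hv) (nabsX Hv) (nabsN Hv) (nabs1 Hv) expr1n mul1r (nabs_prod_le1 Hv).
Qed.

Lemma GLZp_unitmx (A : 'M[K]_n) : GLZp v A -> A \in unitmx.
Proof.
case=> _ vdet; rewrite unitmxE unitfE; apply/eqP => det0.
by move: vdet; rewrite det0 (nabs0 Hv) => /eqP; rewrite eq_sym oner_eq0.
Qed.

Lemma GLZp_mxnorm_le1 (A : 'M[K]_n) : GLZp v A -> N A <= 1.
Proof. by case=> A_le1 _; apply: mxnorm_le. Qed.

(* Cramer's rule: the entries of [invmx A] are cofactors divided by a unit [\det A]. *)
Lemma GLZp_mxnorm_invmx_le1 (A : 'M[K]_n) : GLZp v A -> N (invmx A) <= 1.
Proof.
move=> A_GL; have Au := GLZp_unitmx A_GL; case: A_GL => A_le1 vdet.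
apply: mxnorm_le => // j k; rewrite /invmx Au !mxE (nabsM Hv) (nabsV Hv) vdet invr1 mul1r.
rewrite /cofactor (nabsM Hv) (nabsX Hv) (nabsN Hv) (nabs1 Hv) expr1n mul1r.
by apply: abs_det_le1 => a b; rewrite !mxE.
Qed.

Lemma standard_topology_GL_of (d : 'M[K]_n -> 'M[K]_n -> R) :
  (forall A eps, A \in unitmx -> 0 < eps -> exists2 del, 0 < del &
     forall B, B \in unitmx -> d A B < del -> N (B - A) < eps) ->
  (forall A eps, A \in unitmx -> 0 < eps -> exists2 del, 0 < del &
     forall B, B \in unitmx -> N (B - A) < del -> d A B < eps) ->
  standard_topology_GL v d.
Proof.
move=> d_to_N N_to_d U; split=> U_open A Au UA; have [eps eps_gt0 hU] := U_open A Au UA.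
  have [del del_gt0 hdel] := N_to_d A eps Au eps_gt0.
  by exists del => // B Bu /(hdel B Bu); apply: hU.
have [del del_gt0 hdel] := d_to_N A eps Au eps_gt0.
by exists del => // B Bu /(hdel B Bu); apply: hU.
Qed.

Lemma mxnorm_le1_of_sub1 (A : 'M[K]_n) : N (A - 1%:M) <= 1 -> N A <= 1.
Proof.
move=> hA; rewrite -[A](subrK 1%:M); apply: le_trans (mxnormD _ _) _.
by rewrite ge_max hA mxnorm1_le1.
Qed.

Lemma mxnorm_mul_sub1 (A B : 'M[K]_n) :
  N B <= 1 -> N (A *m B - 1%:M) <= Num.max (N (A - 1%:M)) (N (B - 1%:M)).
Proof.
move=> NB_le1; have -> : A *m B - 1%:M = (A - 1%:M) *m B + (B - 1%:M).
  by rewrite mulmxBl mul1mx addrA subrK.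
apply: le_trans (mxnormD _ _) _; apply: le_max2 (lexx _).
by apply: le_trans (mxnormM _ _) _; rewrite ler_piMr ?mxnorm_ge0.
Qed.

End MatrixNorm.

Section GroupNorm.
Variables (R : realType) (K : fieldType) (v : K -> R) (n : nat) (t : R).
Hypotheses (Hv : nonarchimedean_abs v) (t_ge1 : 1 <= t).
Local Notation N := (@mxnorm R K v n).
Local Notation r := (@rmx R K v n).
Local Notation r' := (@rmx' R K v n t).

Lemma rmx_ge0 (A : 'M[K]_n) : 0 <= r A.
Proof. by rewrite le_max mxnorm_ge0. Qed.

Lemma rmx_invmx (A : 'M[K]_n) : r (invmx A) = r A.
Proof. by rewrite /rmx invmxK maxC. Qed.

Lemma rmx_tr (A : 'M[K]_n) : r A^T = r A.
Proof.
have trB (B : 'M[K]_n) : N (B^T - 1%:M) = N (B - 1%:M) by rewrite -{1}trmx1 -linearB mxnorm_tr.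
by rewrite /rmx -trmx_inv !trB.
Qed.

Lemma rmx_sub1 (X : 'M[K]_n) : X \in unitmx -> N (X - 1%:M) < 1 -> r X = N (X - 1%:M).
Proof. by move=> Xu X_lt1; rewrite /rmx max_l // (mxnorm_invmx_sub1_le Hv). Qed.

Lemma rmx'_ge0 (A : 'M[K]_n) : 0 <= r' A.
Proof. by rewrite le_min rmx_ge0 (le_trans ler01). Qed.

Lemma rmx'_le_rmx (A : 'M[K]_n) : r' A <= r A.
Proof. by rewrite ge_min lexx. Qed.

Lemma rmx'1 : r' 1%:M = 0.
Proof. by rewrite /rmx' /rmx invmx1 subrr (mxnorm0 _ Hv) maxxx min_l // (le_trans ler01). Qed.

Lemma rmx'_gt0 (A : 'M[K]_n) : A != 1%:M -> 0 < r' A.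
Proof.
move=> A_neq1; rewrite lt_min (lt_le_trans ltr01 t_ge1) andbT lt_max.
by rewrite (mxnorm_gt0 Hv) // subr_eq0.
Qed.

Lemma rmx'_invmx (A : 'M[K]_n) : r' (invmx A) = r' A.
Proof. by rewrite /rmx' rmx_invmx. Qed.

Lemma rmx'_tr (A : 'M[K]_n) : r' A^T = r' A.
Proof. by rewrite /rmx' rmx_tr. Qed.

Lemma rmx_lt_of_rmx' (A : 'M[K]_n) del : del <= t -> r' A < del -> r A < del.
Proof.
by move=> del_le_t; rewrite gt_min => /orP[] // /lt_le_trans/(_ del_le_t); rewrite ltxx.
Qed.

Section Multiplicativity.
Hypothesis abs_gap : forall x, v x < t -> v x <= 1.

Lemma mxnorm_lt_le1 (A : 'M[K]_n) : N A < t -> N A <= 1.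
Proof.
move=> A_lt; apply: mxnorm_le => // j k.
exact/abs_gap/(le_lt_trans _ A_lt)/abs_coef_le_mxnorm.
Qed.

Lemma rmx_lt_mxnorm_le1 (A : 'M[K]_n) : r A < t -> N A <= 1 /\ N (invmx A) <= 1.
Proof.
rewrite gt_max => /andP[/mxnorm_lt_le1 A_le1 /mxnorm_lt_le1 iA_le1].
by split; apply: (mxnorm_le1_of_sub1 Hv).
Qed.

Lemma rmx'_mul (A B : 'M[K]_n) : A \in unitmx -> B \in unitmx ->
  r' (A *m B) <= Num.max (r' A) (r' B).
Proof.
move=> Au Bu; have [t_le|] := leP t (Num.max (r' A) (r' B)).
  by apply: le_trans t_le; rewrite ge_min lexx orbT.
rewrite gt_max => /andP[/(rmx_lt_of_rmx' (lexx t)) rA_lt /(rmx_lt_of_rmx' (lexx t)) rB_lt].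
have [_ iA_le1] := rmx_lt_mxnorm_le1 rA_lt; have [B_le1 _] := rmx_lt_mxnorm_le1 rB_lt.
rewrite {2 3}/rmx' (min_l (ltW rA_lt)) (min_l (ltW rB_lt)).
apply: le_trans (rmx'_le_rmx _) _; rewrite /rmx ge_max invmx_mul //; apply/andP; split.
- apply: le_trans (mxnorm_mul_sub1 Hv _ B_le1) _.
  by apply: le_max2; rewrite le_max lexx.
- apply: le_trans (mxnorm_mul_sub1 Hv _ iA_le1) _.
  by rewrite maxC; apply: le_max2; rewrite le_max lexx ?orbT.
Qed.

Lemma ultrametric_GL_left : ultrametric_GL (fun A B : 'M[K]_n => r' (invmx B *m A)).
Proof.
have unitmx_divl (A B : 'M[K]_n) : A \in unitmx -> B \in unitmx -> invmx B *m A \in unitmx.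
  by move=> Au Bu; rewrite unitmx_mul unitmx_inv Au Bu.
split; first by move=> A B _ _; apply: rmx'_ge0.
split; first by move=> A Au; rewrite mulVmx // rmx'1.
split.
  move=> A B Au Bu; have [//|AneqB] := eqVneq A B.
  have : invmx B *m A != 1%:M by apply: contra_neq AneqB => h; rewrite -(mulKVmx Bu A) h mulmx1.
  by move=> /rmx'_gt0/lt0r_neq0/eqP.
split; first by move=> A B Au Bu; rewrite -rmx'_invmx invmx_mul ?unitmx_inv // invmxK.
move=> A B C Au Bu Cu; rewrite maxC -[A in invmx C *m A](mulKVmx Bu) (mulmxA (invmx C)).
exact: rmx'_mul (unitmx_divl _ _ Bu Cu) (unitmx_divl _ _ Au Bu).
Qed.

End Multiplicativity.

Lemma mxnorm_sub_le_rmx (A B : 'M[K]_n) : A \in unitmx -> B \in unitmx ->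
  N (B - A) <= N A * r (invmx B *m A).
Proof.
move=> Au Bu; have -> : B - A = A *m (invmx A *m B - 1%:M) by rewrite mulmxBr mulKVmx // mulmx1.
apply: le_trans (mxnormM Hv _ _) _; rewrite ler_wpM2l ?mxnorm_ge0 //.
by rewrite -rmx_invmx invmx_mul ?unitmx_inv // invmxK le_max lexx.
Qed.

Lemma rmx_le_mxnorm_sub (A B : 'M[K]_n) : A \in unitmx -> B \in unitmx ->
  N (invmx A) * N (B - A) < 1 -> r (invmx B *m A) <= N (invmx A) * N (B - A).
Proof.
move=> Au Bu lt1; have X_le : N (invmx A *m B - 1%:M) <= N (invmx A) * N (B - A).
  by rewrite -[1%:M](mulVmx Au) -mulmxBr (mxnormM Hv).
rewrite -rmx_invmx invmx_mul ?unitmx_inv // invmxK rmx_sub1 ?(le_lt_trans X_le) //.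
by rewrite unitmx_mul unitmx_inv Au Bu.
Qed.

Lemma mxnorm_sub_small (A : 'M[K]_n) eps : A \in unitmx -> 0 < eps ->
  exists2 del, 0 < del & forall B, B \in unitmx -> r' (invmx B *m A) < del -> N (B - A) < eps.
Proof.
move=> Au eps_gt0; have NA_ge0 := mxnorm_ge0 v A.
exists (Num.min 1 (eps / (N A + 1))) => [|B Bu dAB].
  by rewrite lt_min ltr01 divr_gt0 // ltr_wpDl.
have del_le_t : Num.min 1 (eps / (N A + 1)) <= t by rewrite ge_min t_ge1.
apply: le_lt_trans (mxnorm_sub_le_rmx Au Bu) (mul_le_div_addr1_lt NA_ge0 eps_gt0 _).
by apply/ltW/(lt_le_trans (rmx_lt_of_rmx' del_le_t dAB)); rewrite ge_min lexx orbT.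
Qed.

Lemma rmx'_divl_small (A : 'M[K]_n) eps : A \in unitmx -> 0 < eps ->
  exists2 del, 0 < del & forall B, B \in unitmx -> N (B - A) < del -> r' (invmx B *m A) < eps.
Proof.
move=> Au eps_gt0; have NiA_ge0 := mxnorm_ge0 v (invmx A).
have m_gt0 : 0 < Num.min 1 eps by rewrite lt_min ltr01.
exists (Num.min 1 eps / (N (invmx A) + 1)) => [|B Bu NAB]; first by rewrite divr_gt0 // ltr_wpDl.
have lt_m := mul_le_div_addr1_lt NiA_ge0 m_gt0 (ltW NAB).
apply: le_lt_trans (rmx'_le_rmx _) _; apply: le_lt_trans (rmx_le_mxnorm_sub Au Bu _) _.
  by apply: lt_le_trans lt_m _; rewrite ge_min lexx.
by apply: lt_le_trans lt_m _; rewrite ge_min lexx orbT.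
Qed.

Lemma standard_topology_GL_left :
  standard_topology_GL v (fun A B : 'M[K]_n => r' (invmx B *m A)).
Proof. exact: standard_topology_GL_of mxnorm_sub_small rmx'_divl_small. Qed.

Lemma rmx'_GLZp (A B : 'M[K]_n) : GLZp v A -> GLZp v B -> r' (invmx B *m A) = N (A - B).
Proof.
move=> A_GL B_GL; have Au := GLZp_unitmx Hv A_GL; have Bu := GLZp_unitmx Hv B_GL.
have mxnorm_GLZp_mul U X : GLZp v U -> N (invmx U *m X) = N X.
  move=> U_GL; apply: mxnorm_mul_unit_le1 => //; rewrite ?unitmx_inv ?invmxK.
  - exact: GLZp_unitmx U_GL.
  - exact: GLZp_mxnorm_invmx_le1 U_GL.
  - exact: GLZp_mxnorm_le1 U_GL.
have NAB_le1 : N (A - B) <= 1.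
  by apply: le_trans (mxnormD Hv _ _) _; rewrite ge_max (mxnormN Hv) !GLZp_mxnorm_le1.
rewrite /rmx' /rmx invmx_mul ?unitmx_inv // invmxK.
rewrite -[in invmx B *m A - _](mulVmx Bu) -[in invmx A *m B - _](mulVmx Au) -!mulmxBr.
have NBA : N (B - A) = N (A - B) by rewrite -opprB (mxnormN Hv).
by rewrite !mxnorm_GLZp_mul // NBA maxxx min_l // (le_trans NAB_le1).
Qed.

End GroupNorm.

Lemma ultrametric_GL_trmx (R : realType) (K : fieldType) n (d d' : 'M[K]_n -> 'M[K]_n -> R) :
  (forall A B, d' A B = d A^T B^T) -> ultrametric_GL d -> ultrametric_GL d'.
Proof.
move=> d'E [d_ge0 [d_refl [d_sep [d_sym d_ultra]]]].
have trU (A : 'M[K]_n) : A \in unitmx -> A^T \in unitmx by rewrite unitmx_tr.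
split; first by move=> A B Au Bu; rewrite d'E d_ge0 ?trU.
split; first by move=> A Au; rewrite d'E d_refl ?trU.
split; first by move=> A B Au Bu; rewrite d'E => /(d_sep _ _ (trU _ Au) (trU _ Bu))/trmx_inj.
split; first by move=> A B Au Bu; rewrite !d'E d_sym ?trU.
by move=> A B C Au Bu Cu; rewrite !d'E d_ultra ?trU.
Qed.

Section RightMetric.
Variables (R : realType) (K : fieldType) (v : K -> R) (n : nat) (t : R).
Hypotheses (Hv : nonarchimedean_abs v) (t_ge1 : 1 <= t).
Local Notation r' := (@rmx' R K v n t).

Lemma rmx'_divr_tr (A B : 'M[K]_n) : r' (A *m invmx B) = r' (invmx B^T *m A^T).
Proof. by rewrite -rmx'_tr trmx_mul trmx_inv. Qed.

Lemma ultrametric_GL_right (abs_gap : forall x, v x < t -> v x <= 1) :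
  ultrametric_GL (fun A B : 'M[K]_n => r' (A *m invmx B)).
Proof. exact: ultrametric_GL_trmx rmx'_divr_tr (ultrametric_GL_left n Hv t_ge1 abs_gap). Qed.

Lemma standard_topology_GL_right :
  standard_topology_GL v (fun A B : 'M[K]_n => r' (A *m invmx B)).
Proof.
have trB (A B : 'M[K]_n) : mxnorm v (B^T - A^T) = mxnorm v (B - A) by rewrite -linearB mxnorm_tr.
apply: standard_topology_GL_of => A eps Au eps_gt0; have ATu : A^T \in unitmx by rewrite unitmx_tr.
- have [del del_gt0 small] := mxnorm_sub_small Hv t_ge1 ATu eps_gt0.
  by exists del => // B Bu; rewrite rmx'_divr_tr -trB; apply: small; rewrite unitmx_tr.
- have [del del_gt0 small] := rmx'_divl_small t Hv ATu eps_gt0.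
  by exists del => // B Bu; rewrite rmx'_divr_tr -trB; apply: small; rewrite unitmx_tr.
Qed.

End RightMetric.

Theorem mainTheorem8 (p : nat) (R : realType) (K : fieldType) (v : K -> R)
  (n : nat) (t : R) :
  prime p -> is_Qp p v -> (0 < n)%N -> 1 <= t -> t <= p%:R ->
  rmx' v t (1%:M : 'M[K]_n) = 0 /\
  (forall A : 'M[K]_n, A \in unitmx -> A != 1%:M -> 0 < rmx' v t A) /\
  (forall A : 'M[K]_n, A \in unitmx -> rmx' v t (invmx A) = rmx' v t A) /\
  (forall A B : 'M[K]_n, A \in unitmx -> B \in unitmx ->
     rmx' v t (A *m B) <= Num.max (rmx' v t A) (rmx' v t B)) /\
  ultrametric_GL (fun A B : 'M[K]_n => rmx' v t (invmx B *m A)) /\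
  (forall A B C : 'M[K]_n, A \in unitmx -> B \in unitmx -> C \in unitmx ->
     rmx' v t (invmx (C *m B) *m (C *m A)) = rmx' v t (invmx B *m A)) /\
  standard_topology_GL v (fun A B : 'M[K]_n => rmx' v t (invmx B *m A)) /\
  ultrametric_GL (fun A B : 'M[K]_n => rmx' v t (A *m invmx B)) /\
  (forall A B C : 'M[K]_n, A \in unitmx -> B \in unitmx -> C \in unitmx ->
     rmx' v t ((A *m C) *m invmx (B *m C)) = rmx' v t (A *m invmx B)) /\
  standard_topology_GL v (fun A B : 'M[K]_n => rmx' v t (A *m invmx B)) /\
  (forall A B : 'M[K]_n, GLZp v A -> GLZp v B ->
     rmx' v t (invmx B *m A) = mxnorm v (A - B)).
Proof.
move=> p_prime Hv _ t_ge1 t_le_p; have Hna := Qp_nonarchimedean Hv.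
have abs_gap x : v x < t -> v x <= 1.
  by move=> /lt_le_trans/(_ t_le_p); apply: Qp_abs_lt_p_le1.
split; first exact: rmx'1.
split; first by move=> A _; apply: rmx'_gt0.
split; first by move=> A _; apply: rmx'_invmx.
split; first by move=> A B Au Bu; apply: rmx'_mul.
split; first exact: ultrametric_GL_left.
split; first by move=> A B C Au Bu Cu; rewrite invmx_mul // -mulmxA mulKmx.
split; first exact: standard_topology_GL_left.
split; first exact: ultrametric_GL_right.
split; first by move=> A B C Au Bu Cu; rewrite invmx_mul // -mulmxA mulKVmx.
split; first exact: standard_topology_GL_right.
by move=> A B; apply: rmx'_GLZp.
Qed.
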